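(* (a) If $x,y\in P$ are distinct, then $|\{x,y\}^{\perp}|\geq 3$ in $\mathbb{S}$. (b) If $u',v'\in P'$ are distinct, then $|\{u',v'\}^{\perp}|\geq 3$ in $\mathbb{S}$.
   Context: Let $S=(P,L)$ and $S'=(P',L')$ be generalized quadrangles of order $(2,2)$ (every line has 3 points, every point lies on 3 lines, and for each point $x$ and line $l\not\ni x$ exactly one point of $l$ is collinear with $x$), with an isomorphism $x\mapsto x'$ from $S$ to $S'$ (write $u$ for the preimage of $u'\in P'$). In a point-line geometry, $x^{\perp}$ is $x$ together with all points collinear with $x$, and $A^{\perp}=\bigcap_{a\in A}a^{\perp}$. A triad is a set of three pairwise non-collinear points, complete if $|T^{\perp}|=3$. Let $\mathcal{P}=\{(x,y')\in P\times P':y'\in x'^{\perp}\}$ and $\mathcal{L}$ the set of all $3$-subsets $\{(x,u'),(y,v'),(z,w')\}$ of $\mathcal{P}$ where $T=\{x,y,z\}$ (three distinct points) is a line or complete triad of $S$ and $\{u',v',w'\}=T'^{\perp}$ in $S'$ with $u',v',w'$ distinct. The geometry $\mathbb{S}=(\mathbb{P},\mathbb{L})$ has point set $\mathbb{P}=\mathcal{P}\cup P\cup P'$ (disjoint union) and line set $\mathcal{L}\cup\{\{x,(x,u'),u'\}:(x,u')\in\mathcal{P}\}$. *)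

From mathcomp Require Import all_boot.
Set Implicit Arguments. Unset Strict Implicit. Unset Printing Implicit Defensive.

Section Geometry.
Variable T : finType.
Variable Pts : {set T}.
Variable L : {set {set T}}.

Definition collinear (x y : T) : bool := [exists l in L, (x \in l) && (y \in l)].

Definition perp1 (x : T) : {set T} :=
  [set y in Pts | (y == x) || collinear x y].

Definition perp (A : {set T}) : {set T} :=
  Pts :&: \bigcap_(a in A) perp1 a.

Definition triad (A : {set T}) : bool :=
  [&& A \subset Pts, #|A| == 3 &
      [forall a in A, forall b in A, (a != b) ==> ~~ collinear a b]].

Definition complete_triad (A : {set T}) : bool := triad A && (#|perp A| == 3).

End Geometry.

(* Generalized quadrangle of order (2,2), point set = all of T. *)
Definition GQ22 (T : finType) (L : {set {set T}}) : Prop :=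
  [/\ forall l, l \in L -> #|l| = 3,
      forall x : T, #|[set l in L | x \in l]| = 3 &
      forall (x : T) l, l \in L -> x \notin l ->
        #|[set y in l | collinear L x y]| = 1].

Definition GQiso (P P' : finType) (L : {set {set P}}) (L' : {set {set P'}})
  (f : P -> P') : Prop :=
  bijective f /\ forall l : {set P}, (l \in L) = (f @: l \in L').

(* Points of the new geometry: disjoint union  calP + P + P'  where
   calP is carved out of P * P' by the predicate calPp. *)
Definition SP (P P' : finType) : finType := ((P * P') + (P + P'))%type.

Section Construction.
Variables (P P' : finType) (L : {set {set P}}) (L' : {set {set P'}}) (f : P -> P').

(* (x, y') in calP  iff  y' in x'^perp in S' *)
Definition calPp (p : P * P') : bool := p.2 \in perp1 [set: P'] L' (f p.1).

Definition inP (x : P) : SP P P' := inr (inl x).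
Definition inP' (u : P') : SP P P' := inr (inr u).
Definition inCalP (x : P) (u : P') : SP P P' := inl (x, u).

Definition SPts : {set SP P P'} :=
  [set p | match p with inl q => calPp q | inr _ => true end].

Definition calL_line (B : {set SP P P'}) : bool :=
  [exists x : P, exists y : P, exists z : P,
   exists u : P', exists v : P', exists w : P',
   [&& [&& x != y, x != z & y != z],
       [&& u != v, u != w & v != w],
       [&& calPp (x, u), calPp (y, v) & calPp (z, w)],
       ([set x; y; z] \in L) || complete_triad [set: P] L [set x; y; z],
       [set u; v; w] == perp [set: P'] L' (f @: [set x; y; z]) &
       B == [set inCalP x u; inCalP y v; inCalP z w]]].

Definition vert_line (B : {set SP P P'}) : bool :=
  [exists x : P, exists u : P',
     calPp (x, u) && (B == [set inP x; inCalP x u; inP' u])].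

Definition SLines : {set {set SP P P'}} :=
  [set B | calL_line B || vert_line B].

End Construction.

From Pilot Require Import Defs.
From mathcomp Require Import all_boot.

Set Implicit Arguments.
Unset Strict Implicit.
Unset Printing Implicit Defensive.

(* In a generalized quadrangle of order (2,2) any two points a, b have at least
   three common neighbours: the line ab if they are collinear, and otherwise
   the projections of b onto the three lines through a.  In the new geometry
   every x \in P is collinear with every u' \in x'^perp through the line
   {x, (x,u'), u'}, so {x,y}^perp contains a copy of {x',y'}^perp and, dually,
   {u',v'}^perp contains a copy of the preimage of {u',v'}^perp.  Only S'
   being a GQ(2,2) and f being a bijection are needed, and the two points need
   not be distinct. *)

Section PointLineGeometry.
Variables (T : finType) (Pts : {set T}) (L : {set {set T}}).

Lemma collinearC x y : collinear L x y = collinear L y x.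
Proof.
by apply/existsP/existsP => -[l /andP[lL /andP[xl yl]]]; exists l; rewrite lL xl yl.
Qed.

Lemma mem_perp1C x y : (x \in perp1 [set: T] L y) = (y \in perp1 [set: T] L x).
Proof. by rewrite !inE eq_sym collinearC. Qed.

Lemma perp1_line x l : l \in L -> x \in l -> l :&: Pts \subset perp1 Pts L x.
Proof.
move=> lL xl; apply/subsetP => y /setIP[yl yPts].
by rewrite inE yPts; apply/orP; right; apply/existsP; exists l; rewrite lL xl yl.
Qed.

Lemma mem_perp2 a b z :
  (z \in perp Pts L [set a; b]) =
  [&& z \in Pts, z \in perp1 Pts L a & z \in perp1 Pts L b].
Proof. by rewrite /perp inE bigcap_setU !big_set1 !inE. Qed.

End PointLineGeometry.

Section GeneralizedQuadrangle.
Variables (T : finType) (L : {set {set T}}).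
Hypothesis gqL : GQ22 L.

Local Notation perp1 := (perp1 [set: T] L).

Lemma GQ22_line_eq l m p q : l \in L -> m \in L -> p != q ->
  p \in l -> q \in l -> p \in m -> q \in m -> l = m.
Proof.
case: gqL => card_line _ unique_proj lL mL pq pl ql pm qm.
apply/eqP; apply: contraT => lm.
have [z zm zl] : exists2 z, z \in m & z \notin l.
  apply/exists_inP; apply: contraR lm => /exists_inPn ml.
  have sml : m \subset l by apply/subsetP => z /ml; rewrite negbK.
  by rewrite eq_sym eqEcard sml !card_line.
have : [set p; q] \subset [set y in l | collinear L z y].
  apply/subsetP => y /set2P[]->; rewrite inE ?pl ?ql;
    by apply/existsP; exists m; rewrite mL zm ?pm ?qm.
by move/subset_leq_card; rewrite cards2 pq unique_proj.
Qed.

Lemma GQ22_card_perp2_collinear a b :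
  collinear L a b -> 3 <= #|perp1 a :&: perp1 b|.
Proof.
case/existsP=> l /andP[lL /andP[al bl]]; have [card_line _ _] := gqL.
rewrite -(card_line l lL) -[l]setIT; apply/subset_leq_card/subsetIP.
by split; apply: perp1_line.
Qed.

Definition proj_line (b : T) (l : {set T}) : T :=
  odflt b [pick y in l | collinear L b y].

Lemma proj_lineP b l : l \in L -> b \notin l ->
  proj_line b l \in l /\ collinear L b (proj_line b l).
Proof.
move=> lL bl; have [_ _ unique_proj] := gqL.
have /eqP/cards1P[y def_y] := unique_proj b l lL bl.
rewrite /proj_line; case: pickP => [z /andP[]//|].
by move/(_ y); have := set11 y; rewrite -def_y inE => ->.
Qed.

Lemma GQ22_card_perp2_noncollinear a b :
  ~~ collinear L a b -> 3 <= #|perp1 a :&: perp1 b|.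
Proof.
move=> ab; have [_ lines_thru _] := gqL.
set La := [set l in L | a \in l].
have notb l : l \in La -> b \notin l.
  rewrite inE => /andP[lL al]; apply: contra ab => bl.
  by apply/existsP; exists l; rewrite lL al bl.
have projP l : l \in La -> proj_line b l \in l /\ collinear L b (proj_line b l).
  by move=> lLa; apply: proj_lineP (notb l lLa); move: lLa; rewrite inE => /andP[].
have proj_neq_a l : l \in La -> proj_line b l != a.
  move=> /projP[_]; apply: contraTN => /eqP->; by rewrite collinearC.
rewrite -(lines_thru a) -(card_in_imset (f := proj_line b)).
  apply/subset_leq_card/subsetP => _ /imsetP[l lLa ->].
  have [pl pb] := projP l lLa; move: lLa; rewrite inE => /andP[lL al].
  rewrite inE (subsetP (perp1_line [set: T] lL al)) ?inE ?pl //=.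
  by rewrite pb orbT.
move=> l m lLa mLa plm; have [pl _] := projP l lLa; have [pm _] := projP m mLa.
move: lLa mLa; rewrite !inE => /andP[lL al] /andP[mL am].
by apply: (GQ22_line_eq lL mL (proj_neq_a l _)) => //; rewrite ?inE ?lL ?al // plm.
Qed.

Lemma GQ22_card_perp2 a b : 3 <= #|perp1 a :&: perp1 b|.
Proof.
by case: (boolP (collinear L a b));
  [apply: GQ22_card_perp2_collinear | apply: GQ22_card_perp2_noncollinear].
Qed.

End GeneralizedQuadrangle.

Section Construction.
Variables (P P' : finType) (L : {set {set P}}) (L' : {set {set P'}}) (f : P -> P').

Local Notation SPts := (SPts L' f).
Local Notation SLines := (SLines L L' f).
Local Notation inP := (@Defs.inP P P').
Local Notation inP' := (@Defs.inP' P P').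

Lemma inP_inj : injective inP. Proof. by move=> x y []. Qed.
Lemma inP'_inj : injective inP'. Proof. by move=> u v []. Qed.

Lemma vert_line_mem x u : u \in perp1 [set: P'] L' (f x) ->
  [set inP x; inCalP x u; inP' u] \in SLines.
Proof.
by move=> xu; rewrite inE; apply/orP; right; apply/existsP; exists x;
  apply/existsP; exists u; rewrite /calPp xu eqxx.
Qed.

Lemma collinear_inP_inP' x u : u \in perp1 [set: P'] L' (f x) ->
  collinear SLines (inP x) (inP' u).
Proof.
by move=> xu; apply/existsP; exists [set inP x; inCalP x u; inP' u];
  rewrite vert_line_mem // !inE !eqxx orbT.
Qed.

Lemma perp_inP_pair x y u :
  u \in perp1 [set: P'] L' (f x) :&: perp1 [set: P'] L' (f y) ->
  inP' u \in perp SPts SLines [set inP x; inP y].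
Proof.
by case/setIP=> xu yu; rewrite mem_perp2 !inE !collinear_inP_inP' ?orbT.
Qed.

Lemma perp_inP'_pair x u v :
  f x \in perp1 [set: P'] L' u :&: perp1 [set: P'] L' v ->
  inP x \in perp SPts SLines [set inP' u; inP' v].
Proof.
case/setIP; rewrite !(mem_perp1C _ (f x)) => xu xv.
by rewrite mem_perp2 !inE !(collinearC _ (inP' _)) !collinear_inP_inP' ?orbT.
Qed.

Lemma card_perp_inP_pair x y : GQ22 L' ->
  3 <= #|perp SPts SLines [set inP x; inP y]|.
Proof.
move=> gqL'; apply: leq_trans (GQ22_card_perp2 gqL' (f x) (f y)) _.
rewrite -(card_imset _ inP'_inj); apply/subset_leq_card/subsetP.
by move=> _ /imsetP[u uxy ->]; apply: perp_inP_pair.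
Qed.

Lemma card_perp_inP'_pair u v : GQ22 L' -> bijective f ->
  3 <= #|perp SPts SLines [set inP' u; inP' v]|.
Proof.
move=> gqL' [g _ gK]; apply: leq_trans (GQ22_card_perp2 gqL' u v) _.
have inj_g : injective (inP \o g) by apply: inj_comp inP_inj (can_inj gK).
rewrite -(card_imset _ inj_g); apply/subset_leq_card/subsetP.
by move=> _ /imsetP[y yuv ->]; apply: perp_inP'_pair; rewrite gK.
Qed.

End Construction.

Theorem lemma4p1 (P P' : finType) (L : {set {set P}}) (L' : {set {set P'}})
  (f : P -> P') :
  GQ22 L -> GQ22 L' -> GQiso L L' f ->
  (forall x y : P, x != y ->
     3 <= #|perp (SPts L' f) (SLines L L' f) [set inP P' x; inP P' y]|) /\
  (forall u v : P', u != v ->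
     3 <= #|perp (SPts L' f) (SLines L L' f) [set inP' P u; inP' P v]|).
Proof.
move=> _ gqL' [bij_f _].
by split=> [x y _ | u v _]; [apply: card_perp_inP_pair | apply: card_perp_inP'_pair].
Qed.
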